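(* Let $k$ be a positive integer. If $H$ is a thickened $4k$-star, then $\mathrm{ecrw}(H)\ge k$.
   Context: A thickened $n$-star is the graph $S_{n,n}$ obtained from the star $K_{1,n}$ by replacing each edge with $n$ internally vertex-disjoint paths of length 2; explicitly, vertices $c$, $u_1,\dots,u_n$ and $v_{i,j}$ ($i,j\in[n]$), with edges $cv_{i,j}$ and $u_iv_{i,j}$. A tree-cut decomposition of a graph $G$ is a pair $\mathcal{T}=(T,\{X_t\}_{t\in V(T)})$ where $T$ is a tree and the bags $X_t\subseteq V(G)$ are pairwise disjoint (possibly empty) with $\bigcup_{t\in V(T)}X_t=V(G)$. For a node $t$ of $T$, let $T_1,\dots,T_m$ be the connected components of $T-t$ and $Z_i=\bigcup_{s\in V(T_i)}X_s$; $\mathrm{cross}_{\mathcal{T}}(t)$ is the number of edges of $G$ whose two endpoints lie in two distinct sets among $Z_1,\dots,Z_m$ (if $T$ has one node, $\mathrm{cross}_{\mathcal T}(t)=0$). The crossing number of $\mathcal{T}$ is $\max_{t}\mathrm{cross}_{\mathcal{T}}(t)$, and the thickness of $\mathcal{T}$ is $\max_t|X_t|$. The edge-crossing width of $\mathcal T$ is the maximum of its crossing number and its thickness, and $\mathrm{ecrw}(G)$ is the minimum edge-crossing width over all tree-cut decompositions of $G$. *)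

From mathcomp Require Import all_boot.
Set Implicit Arguments. Unset Strict Implicit. Unset Printing Implicit Defensive.

(* A simple graph: vertex finType V with symmetric irreflexive adjacency E.
   Edges are the 2-element subsets {u,v} with E u v. *)

Definition num_edges (V : finType) (E : rel V) (P : V -> V -> bool) : nat :=
  #|[set A : {set V} | [exists u, exists v,
       [&& A == [set u; v], E u v & P u v]]]|.

Definition is_tree (N : finType) (tT : rel N) : Prop :=
  [/\ 0 < #|N|,
      symmetric tT, irreflexive tT,
      (forall a b, connect tT a b) &
      (* acyclic: no cycle x -> p -> x with at least 3 distinct vertices *)
      (forall x p, uniq (x :: p) -> path tT x p -> tT (last x p) x ->
         size p <= 1)].

Definition is_tree_cut_decomp (V : finType) (N : finType) (tT : rel N)
  (X : N -> {set V}) : Prop :=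
  [/\ is_tree tT,
      (forall s t, s != t -> [disjoint X s & X t]) &
      (\bigcup_(t : N) X t = [set: V])].

Definition tree_minus (N : finType) (tT : rel N) (t : N) : rel N :=
  [rel a b | [&& tT a b, a != t & b != t]].

Definition cross (V : finType) (E : rel V) (N : finType) (tT : rel N)
  (X : N -> {set V}) (t : N) : nat :=
  num_edges E (fun u v => [exists s1, exists s2,
     [&& u \in X s1, v \in X s2, s1 != t, s2 != t &
         ~~ connect (tree_minus tT t) s1 s2]]).

Definition crossing_number (V : finType) (E : rel V) (N : finType)
  (tT : rel N) (X : N -> {set V}) : nat :=
  \max_(t : N) cross E tT X t.

Definition thickness (V : finType) (N : finType) (X : N -> {set V}) : nat :=
  \max_(t : N) #|X t|.

Definition ec_width (V : finType) (E : rel V) (N : finType)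
  (tT : rel N) (X : N -> {set V}) : nat :=
  maxn (crossing_number E tT X) (thickness X).

(* ---- The thickened n-star S_{n,n} ----
   vertices: inl (inl tt) = c, inl (inr i) = u_i, inr (i,j) = v_{i,j} *)
Definition sstar_V (n : nat) : finType := ((unit + 'I_n) + ('I_n * 'I_n))%type.

Definition sstar_adj (n : nat) : rel (sstar_V n) :=
  fun x y =>
    match x, y with
    | inl (inl _), inr _ => true
    | inr _, inl (inl _) => true
    | inl (inr i), inr (i', _) => i == i'
    | inr (i', _), inl (inr i) => i == i'
    | _, _ => false
    end.

From mathcomp Require Import all_boot.
From mathcomp Require Import zify.
Set Implicit Arguments. Unset Strict Implicit.

(* We prove the stronger, uniform bound  n <= 4 * ecrw(S_{n,n})  for every
   tree-cut decomposition (T, X) of the thickened n-star; the theorem is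
   the case n = 4k.

   Let tc be the node whose bag holds the centre c.  If |X tc| >= n we are
   done, so some u_i lies in a bag X tu with tu <> tc.  Let s be the
   neighbour of tc on the tree path to tu.  Each of the n vertices v_{i,j}
   lies in a bag X t, and exactly one of the following holds:
   - t = tc or t = s (at most |X tc| + |X s| such j);
   - t <> tc lies outside the component of T - tc containing tu: then the
     edge u_i v_{i,j} crosses at tc (at most cross(tc) such j);
   - t <> s lies in that component: then t is separated from tc in T - s,
     so the edge c v_{i,j} crosses at s (at most cross(s) such j).
   Each of these four quantities is at most the width, whence n <= 4 width. *)

Section TreeSeparation.
Variables (N : finType) (tT : rel N).
Hypothesis tree_tT : is_tree tT.

Definition remove_edge (a b : N) : rel N :=
  [rel x y | tT x y && ~~ (((x == a) && (y == b)) || ((x == b) && (y == a)))].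

Lemma remove_edge_sym a b : symmetric (remove_edge a b).
Proof.
case: tree_tT => _ sym _ _ _ x y; rewrite /remove_edge /= sym.
by case: (x == a); case: (y == b); case: (x == b); case: (y == a).
Qed.

Lemma edge_is_bridge a b : tT a b -> ~~ connect (remove_edge a b) a b.
Proof.
case: tree_tT => _ sym irr _ acyclic tab; apply/negP => /connectP [p pth lastp].
have a_neq_b : a != b by apply/eqP => eq_ab; move: tab; rewrite eq_ab irr.
move: lastp a_neq_b; case: (shortenP pth) => q qpth quniq _ lastq a_neq_b.
case: q qpth quniq lastq => [|x [|y q]] qpth quniq lastq.
- by rewrite /= lastq eqxx in a_neq_b.
- rewrite /= in lastq; subst x; move: qpth => /= /andP [/andP [_ ab_removed] _].
  by rewrite !eqxx in ab_removed.
- have tpath : path tT a [:: x, y & q].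
    by apply: (sub_path _ qpth) => v w /andP [].
  by have := acyclic a _ quniq tpath; rewrite -lastq sym tab => /(_ isT).
Qed.

Lemma tree_minus_sub_remove_edge s a b : (s == a) || (s == b) ->
  subrel (connect (tree_minus tT s)) (connect (remove_edge a b)).
Proof.
move=> s_end; apply: connect_sub => x y; rewrite /tree_minus /remove_edge /=.
move=> /and3P [txy x_neq_s y_neq_s]; apply: connect1; rewrite /= txy /=.
apply/negP => /orP [] /andP [/eqP ? /eqP ?]; subst;
  case/orP: s_end => /eqP ?; subst; by rewrite ?eqxx in x_neq_s y_neq_s.
Qed.

Lemma neighbour_separates a s w : tT a s ->
  connect (tree_minus tT a) s w -> ~~ connect (tree_minus tT s) a w.
Proof.
move=> tas conn_sw; apply/negP => conn_aw.
have aw : connect (remove_edge a s) a w.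
  by apply: (tree_minus_sub_remove_edge (s := s)) conn_aw; rewrite eqxx orbT.
have sw : connect (remove_edge a s) s w.
  by apply: (tree_minus_sub_remove_edge (s := a)) conn_sw; rewrite eqxx.
rewrite (sym_connect_sym (@remove_edge_sym a s)) in sw.
by have := edge_is_bridge tas; rewrite (connect_trans aw sw).
Qed.

(* For a <> u, some neighbour s of a lies in the component of T - a
   containing u (the first step of the path from a to u). *)
Lemma first_step a u : a != u ->
  exists2 s, tT a s & connect (tree_minus tT a) s u.
Proof.
case: tree_tT => _ _ _ conn _ a_neq_u.
case/connectP: (conn a u) => p pth lastp.
rewrite lastp in a_neq_u *; move: a_neq_u.
case: (shortenP pth) => q qpth quniq _ a_neq_last.
case: q qpth quniq a_neq_last => [|s q] qpth quniq a_neq_last.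
  by rewrite /= eqxx in a_neq_last.
move: qpth => /= /andP [tas qpth]; exists s => //.
apply/connectP; exists q => //.
apply: (sub_in_path (P := [pred x | x != a])) qpth.
  by move=> x y; rewrite !inE /tree_minus /= => -> -> ->.
move: quniq; rewrite /= in_cons negb_or => /andP [/andP [a_neq_s a_notin_q] _].
rewrite /= eq_sym a_neq_s /=; apply/allP => x x_in_q; apply/eqP => eq_xa.
by rewrite -eq_xa x_in_q in a_notin_q.
Qed.

End TreeSeparation.

Lemma star_le_num_edges (V : finType) (E : rel V) (P : V -> V -> bool)
    (I : finType) (a : V) (f : I -> V) (J : {set I}) :
  injective f -> (forall j, j \in J -> [&& a != f j, E a (f j) & P a (f j)]) ->
  #|J| <= num_edges E P.
Proof.
move=> f_inj edgeJ; rewrite /num_edges.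
rewrite -(@card_in_imset _ _ (fun j => [set a; f j]) J).
  apply: subset_leq_card; apply/subsetP => A /imsetP [j jJ ->]; rewrite inE.
  apply/existsP; exists a; apply/existsP; exists (f j).
  by case/and3P: (edgeJ j jJ) => _ -> ->; rewrite eqxx.
move=> j1 j2 j1J j2J /= eq_edges.
have: f j1 \in [set a; f j2] by rewrite -eq_edges !inE eqxx orbT.
rewrite !inE => /orP [/eqP eq_a|/eqP eq_f]; last exact: f_inj.
by case/and3P: (edgeJ j1 j1J); rewrite eq_a eqxx.
Qed.

Lemma card_preim_inj (V I : finType) (f : I -> V) (A : {set V}) :
  injective f -> #|[set j | f j \in A]| <= #|A|.
Proof.
move=> f_inj; rewrite -(card_imset _ f_inj); apply: subset_leq_card.
by apply/subsetP => x /imsetP [j]; rewrite inE => fjA ->.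
Qed.

Lemma four_le_mul (a b c d w : nat) :
  a <= w -> b <= w -> c <= w -> d <= w -> (a + b) + (c + d) <= 4 * w.
Proof. by move=> *; lia. Qed.

Section ThickenedStarDecomposition.
Variables (n : nat) (N : finType) (tT : rel N) (X : N -> {set sstar_V n}).
Hypothesis decomp : is_tree_cut_decomp tT X.

Let E := @sstar_adj n.
Let centre : sstar_V n := inl (inl tt).
Let hub (i : 'I_n) : sstar_V n := inl (inr i).
Let spoke (i j : 'I_n) : sstar_V n := inr (i, j).

Lemma cross_le_width t : cross E tT X t <= ec_width E tT X.
Proof.
apply: leq_trans (leq_maxl _ _).
exact: (leq_bigmax (F := fun t => cross E tT X t)).
Qed.

Lemma bag_le_width t : #|X t| <= ec_width E tT X.
Proof.
apply: leq_trans (leq_maxr _ _).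
exact: (leq_bigmax (F := fun t => #|X t|)).
Qed.

Lemma in_some_bag x : exists t, x \in X t.
Proof.
case: decomp => _ _ cover.
have : x \in [set: sstar_V n] by rewrite inE.
by rewrite -cover => /bigcupP [t _ xt]; exists t.
Qed.

Lemma spokes_count tc tu s i :
  centre \in X tc -> hub i \in X tu -> tc != tu ->
  tT tc s -> connect (tree_minus tT tc) s tu ->
  n <= (cross E tT X tc + #|X tc|) + (cross E tT X s + #|X s|).
Proof.
move=> centre_tc hub_tu tc_neq_tu tcs s_tu.
have [tree_tT _ _] := decomp.
have tc_neq_s : tc != s.
  by apply/eqP => eq_tcs; case: tree_tT => _ _ irr _ _; rewrite eq_tcs irr in tcs.
have spoke_inj : injective (spoke i) by move=> j1 j2 [].
pose bag_with (p : pred N) j := [exists t, (spoke i j \in X t) && p t].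
pose far := [set j | bag_with [pred t | (t != tc)
                                  && ~~ connect (tree_minus tT tc) tu t] j].
pose near := [set j | bag_with [pred t | [&& t != tc, t != s
                                  & connect (tree_minus tT tc) tu t]] j].
have cover : [set: 'I_n] \subset (far :|: [set j | spoke i j \in X tc])
                            :|: (near :|: [set j | spoke i j \in X s]).
  apply/subsetP => j _; have [t vt] := in_some_bag (spoke i j).
  rewrite !inE; case: (eqVneq t tc) => [<-|t_neq_tc]; first by rewrite vt orbT.
  case: (eqVneq t s) => [<-|t_neq_s]; first by rewrite vt !orbT.
  case conn: (connect (tree_minus tT tc) tu t).
  - by apply/orP; right; apply/orP; left; apply/existsP; exists t;
      rewrite /= vt t_neq_tc t_neq_s conn.
  - by apply/orP; left; apply/orP; left; apply/existsP; exists t;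
      rewrite /= vt t_neq_tc conn.
have far_le : #|far| <= cross E tT X tc.
  apply: (star_le_num_edges (a := hub i) spoke_inj) => j.
  rewrite inE => /existsP [t /and3P [vt t_neq_tc not_conn]].
  rewrite /= eqxx /=; apply/existsP; exists tu; apply/existsP; exists t.
  by rewrite hub_tu vt eq_sym tc_neq_tu t_neq_tc not_conn.
have near_le : #|near| <= cross E tT X s.
  apply: (star_le_num_edges (a := centre) spoke_inj) => j.
  rewrite inE => /existsP [t /and4P [vt _ t_neq_s conn]] /=.
  apply/existsP; exists tc; apply/existsP; exists t.
  rewrite centre_tc vt tc_neq_s t_neq_s /=.
  apply: (neighbour_separates tree_tT tcs).
  exact: connect_trans s_tu conn.
rewrite -{1}(card_ord n) -cardsT; apply: leq_trans (subset_leq_card cover) _.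
apply: leq_trans (leq_card_setU _ _) _.
apply: leq_add; apply: leq_trans (leq_card_setU _ _) _;
  apply: leq_add => //; exact: card_preim_inj spoke_inj.
Qed.

Lemma sstar_width_bound : n <= 4 * ec_width E tT X.
Proof.
have [tree_tT _ _] := decomp.
have [tc centre_tc] := in_some_bag centre.
case: (boolP [forall i, hub i \in X tc]) => [/forallP hubs_in_tc|].
  have hub_inj : injective hub by move=> ? ? [].
  have := card_preim_inj (X tc) hub_inj.
  have -> : [set j | hub j \in X tc] = setT.
    by apply/setP => j; rewrite !inE hubs_in_tc.
  rewrite cardsT card_ord => n_le_bag.
  apply: leq_trans (leq_trans n_le_bag (bag_le_width tc)) _.
  exact: leq_pmull.
move=> /forallPn [i hub_out].
have [tu hub_tu] := in_some_bag (hub i).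
have tc_neq_tu : tc != tu by apply: contraNneq hub_out => ->.
have [s tcs s_tu] := first_step tree_tT tc_neq_tu.
apply: leq_trans (spokes_count centre_tc hub_tu tc_neq_tu tcs s_tu) _.
by apply: four_le_mul; rewrite ?cross_le_width ?bag_le_width.
Qed.

End ThickenedStarDecomposition.

Theorem lemma3p15 (k : nat) (hk : 0 < k)
  (N : finType) (tT : rel N) (X : N -> {set sstar_V (4 * k)}) :
  is_tree_cut_decomp tT X ->
  k <= ec_width (@sstar_adj (4 * k)) tT X.
Proof.
move=> decomp; have := sstar_width_bound decomp.
by rewrite leq_pmul2l.
Qed.
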